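(* Let $p$ be a prime number and let $x,y,z\in\mathbb{N}$ with $x\le y\le z$ satisfy $\frac{4}{p}=\frac{1}{x}+\frac{1}{y}+\frac{1}{z}$. Then $\gcd(y,p^2)\ne p^2$ and $\gcd(z,p^2)\ne p^2$.
   Context: $\mathbb{N}$ denotes the positive integers. *)

From mathcomp Require Import all_boot all_order all_algebra.

(* From 4/p = 1/x + 1/y + 1/z with x <= y <= z one gets p < 4x <= 3p, so p does
   not divide x, and 4/p - 1/x <= 2/y, which forces y < p^2.  Clearing
   denominators gives 4xyz = pxy + p(x + y)z; if p^2 divides z, the two terms
   4xyz and p(x + y)z are divisible by p^2, hence p | xy and p | y, and then
   they are even divisible by p^3, so p^2 | xy and p^2 | y < p^2, which is
   impossible. *)

From mathcomp Require Import all_boot all_order all_algebra.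
From mathcomp Require Import zify ring.
Import GRing.Theory Num.Theory.
Local Open Scope ring_scope.

Lemma egyptian3_natE {R : numFieldType} {p x y z : nat} :
  (0 < p)%N -> (0 < x)%N -> (0 < y)%N -> (0 < z)%N ->
  (4%:R / p%:R : R) = 1 / x%:R + 1 / y%:R + 1 / z%:R ->
  (4 * x * y * z = p * (y * z + x * z + x * y))%N.
Proof.
move=> p_gt0 x_gt0 y_gt0 z_gt0 E; apply/eqP; rewrite -(eqr_nat R) -subr_eq0.
have nz n : (0 < n)%N -> n%:R != 0 :> R by rewrite pnatr_eq0 -lt0n.
have -> : (4 * x * y * z)%:R - (p * (y * z + x * z + x * y))%:R
   = p%:R * x%:R * y%:R * z%:R * (4%:R / p%:R - (1 / x%:R + 1 / y%:R + 1 / z%:R)) :> R.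
  by rewrite !natrM !natrD; field; rewrite !nz.
by rewrite E subrr mulr0.
Qed.

Section ErdosStraus.

Local Open Scope nat_scope.

Context {p x y z : nat}.
Hypotheses (x_gt0 : 0 < x) (y_gt0 : 0 < y) (z_gt0 : 0 < z).
Hypotheses (le_xy : x <= y) (le_yz : y <= z).
Hypothesis erdos_strausE : 4 * x * y * z = p * (y * z + x * z + x * y).

Lemma ltn_p_4x : p < 4 * x.
Proof.
have : p * (y * z) < 4 * x * (y * z) by nia.
by rewrite ltn_pmul2r ?muln_gt0 ?y_gt0.
Qed.

Lemma leq_4x_3p : 4 * x <= 3 * p.
Proof.
have : 4 * x * (y * z) <= 3 * p * (y * z) by nia.
by rewrite leq_pmul2r ?muln_gt0 ?y_gt0.
Qed.

Lemma leq_4xy : 4 * x * y <= p * (2 * x + y).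
Proof.
have : 4 * x * y * z <= p * (2 * x + y) * z by nia.
by rewrite leq_pmul2r.
Qed.

Lemma ltn_y_p2 : 1 < p -> y < p ^ 2.
Proof.
move=> p_gt1; rewrite ltnNge; apply/negP => le_p2y.
have p_lt_4x := ltn_p_4x.
have le_x_p2 : x * (4 * p - 2) <= p ^ 2.
  have := leq_4xy; nia.
nia.
Qed.

Hypothesis p_prime : prime p.

Lemma p2_dvd_y_of_dvd_z : ~~ (p %| x) -> p ^ 2 %| z -> p ^ 2 %| y.
Proof.
move=> pNx p2z.
have p_gt0 := prime_gt0 p_prime.
have eqz : 4 * x * y * z = p * (x * y) + p * (x + y) * z.
  by rewrite erdos_strausE; ring.
have p_dvd_y : p %| y.
  have p2_dvd_xyz : p ^ 2 %| p * (x + y) * z by apply: dvdn_mull.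
  have : p * p %| p * (x * y).
    by rewrite mulnn -(dvdn_addl _ p2_dvd_xyz) -eqz; apply: dvdn_mull.
  by rewrite dvdn_pmul2l // Euclid_dvdM // (negbTE pNx).
have p3_dvd_xyz : p * p ^ 2 %| p * (x + y) * z.
  by rewrite -mulnA; apply: dvdn_mul => //; apply: dvdn_mull.
have : p * p ^ 2 %| p * (x * y).
  rewrite -(dvdn_addl _ p3_dvd_xyz) -eqz mulnC [4 * x * y * z]mulnC.
  by apply: dvdn_mul => //; apply: dvdn_mull.
by rewrite dvdn_pmul2l // Gauss_dvdr // coprimeXl // prime_coprime.
Qed.

End ErdosStraus.

Theorem lemma3 (p x y z : nat) :
  prime p -> (0 < x)%N -> (0 < y)%N -> (0 < z)%N ->
  (x <= y)%N -> (y <= z)%N ->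
  (4%:R / p%:R : rat) = 1 / x%:R + 1 / y%:R + 1 / z%:R ->
  gcdn y (p ^ 2) <> (p ^ 2)%N /\ gcdn z (p ^ 2) <> (p ^ 2)%N.
Proof.
move=> p_prime x_gt0 y_gt0 z_gt0 le_xy le_yz E.
have {}E := egyptian3_natE (prime_gt0 p_prime) x_gt0 y_gt0 z_gt0 E.
have p2Ny : ~~ (p ^ 2 %| y)%N.
  apply/negP => /(dvdn_leq y_gt0); rewrite leqNgt.
  by rewrite (ltn_y_p2 x_gt0 y_gt0 z_gt0 le_xy le_yz E (prime_gt1 p_prime)).
have pNx : ~~ (p %| x)%N.
  apply/negP => /(dvdn_leq x_gt0).
  have := leq_4x_3p x_gt0 y_gt0 z_gt0 le_xy le_yz E; lia.
split=> /gcdn_idPr; first exact/negP.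
by move/(p2_dvd_y_of_dvd_z E p_prime pNx); exact/negP.
Qed.
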